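(* Let $\langle\mathfrak B,\varphi,(Y,\mathbb S,\sigma)\rangle$ be a linear cocycle with finite-dimensional Banach fibre $\mathfrak B$. Then for every $y\in Y$ there exists a constant $L>0$ such that $|\varphi(t,u,y)|\le L|u|$ for all $t\in\mathbb T$, $t\ge0$, and all $u\in\mathfrak B^+_y:=\{u\in\mathfrak B:\ \sup_{t\ge0}|\varphi(t,u,y)|<+\infty\}$.
   Context: $\mathbb S$ is $\mathbb R$ or $\mathbb Z$, $\mathbb T$ is a sub-semigroup of $\mathbb S$ containing $\mathbb S_+=\{s\in\mathbb S: s\ge0\}$, and $(Y,\mathbb S,\sigma)$ is a dynamical system on a metric space $Y$. A linear cocycle over $(Y,\mathbb S,\sigma)$ with fibre the Banach space $(\mathfrak B,|\cdot|)$ is a continuous map $\varphi:\mathbb T\times\mathfrak B\times Y\to\mathfrak B$ with $\varphi(0,u,y)=u$, $\varphi(t+\tau,u,y)=\varphi(t,\varphi(\tau,u,y),\sigma(\tau,y))$ for all $t,\tau\in\mathbb T$, $u\in\mathfrak B$, $y\in Y$, and such that $\varphi(t,\cdot,y)$ is linear for every $(t,y)$. *)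

From HB Require Import structures.
From mathcomp Require Import all_boot all_order all_algebra.
From mathcomp Require Import all_classical all_reals all_analysis.
Set Implicit Arguments. Unset Strict Implicit. Unset Printing Implicit Defensive.
Import Order.TTheory GRing.Theory Num.Theory.
Import numFieldNormedType.Exports.
Local Open Scope classical_set_scope.
Local Open Scope ring_scope.

(* All times are represented as real numbers.  The time set S is either
   the whole real line (S = R) or the integers embedded in R (S = Z). *)
Definition is_time_set (R : realType) (S : set R) : Prop :=
  S = setT \/ S = range (fun n : int => (n%:~R : R)).

Definition is_time_semigroup (R : realType) (S T : set R) : Prop :=
  T `<=` S /\ (forall t tau, T t -> T tau -> T (t + tau)) /\
  [set s | S s /\ 0 <= s] `<=` T.

Definition dynamical_system (R : realType) (S : set R) (Y : topologicalType)
  (sigma : R -> Y -> Y) : Prop :=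
  {within S `*` [set: Y], continuous (fun p : R * Y => sigma p.1 p.2)} /\
  (forall y, sigma 0 y = y) /\
  (forall t tau y, S t -> S tau -> sigma (t + tau) y = sigma t (sigma tau y)).

Definition linear_cocycle (R : realType) (T : set R) (Y : topologicalType)
  (sigma : R -> Y -> Y) (B : normedModType R) (phi : R -> B -> Y -> B) : Prop :=
  {within T `*` [set: B] `*` [set: Y],
     continuous (fun p : R * B * Y => phi p.1.1 p.1.2 p.2)} /\
  (forall u y, phi 0 u y = u) /\
  (forall t tau u y, T t -> T tau ->
      phi (t + tau) u y = phi t (phi tau u y) (sigma tau y)) /\
  (forall t y, T t -> forall (a : R) (u v : B),
      phi t (a *: u + v) y = a *: phi t u y + phi t v y).

Definition finite_dimensional (R : realType) (B : normedModType R) : Prop :=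
  exists (n : nat) (e : 'I_n -> B), forall u : B,
    exists c : 'I_n -> R, u = \sum_(i < n) c i *: e i.

Definition bounded_forward_set (R : realType) (T : set R) (Y : Type)
  (B : normedModType R) (phi : R -> B -> Y -> B) (y : Y) : set B :=
  [set u | exists M : R, forall t, T t -> 0 <= t -> `|phi t u y| <= M].

From HB Require Import structures.
From mathcomp Require Import all_boot all_order all_algebra.
From mathcomp Require Import all_classical all_reals all_analysis.
Import Order.TTheory GRing.Theory Num.Theory.
Import numFieldNormedType.Exports.
Local Open Scope classical_set_scope.
Local Open Scope ring_scope.
Set Implicit Arguments. Unset Strict Implicit. Unset Printing Implicit Defensive.

(* The vectors with bounded forward orbit form a linear subspace of B, so they
   are spanned by finitely many f_1, ..., f_m among them, with
   |phi(t, f_k, y)| <= M_k.  In finite dimension every u in this span is a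
   combination of the f_k with coefficients at most C |u|: by induction on the
   spanning list, spans are closed, so a vector outside a span keeps a positive
   distance from it.  Linearity then gives |phi(t, u, y)| <= C (sum M_k) |u|. *)

Section LinearSpan.
Variables (K : fieldType) (E : lmodType K).

Definition linear_subspace (V : set E) : Prop :=
  V 0 /\ forall a u v, V u -> V v -> V (a *: u + v).

Definition lin_span (s : seq E) : set E :=
  [set u | exists c : seq K, u = \sum_(i < size s) c`_i *: s`_i].

Lemma linear_subspaceZ V a u : linear_subspace V -> V u -> V (a *: u).
Proof. by case=> V0 VL Vu; rewrite -[_ *: u]addr0; apply: VL. Qed.

Lemma linear_subspaceB V u v : linear_subspace V -> V u -> V v -> V (u - v).
Proof. by case=> V0 VL Vu Vv; rewrite addrC -scaleN1r; apply: VL. Qed.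

Lemma linear_subspace_lin_span s : linear_subspace (lin_span s).
Proof.
split; first by exists [::]; rewrite big1 // => i _; rewrite nth_nil scale0r.
move=> a _ _ [c ->] [c' ->]; exists (mkseq (fun i => a * c`_i + c'`_i) (size s)).
rewrite scaler_sumr -big_split; apply: eq_bigr => i _.
by rewrite nth_mkseq // scalerDl scalerA.
Qed.

Definition add_line (V : set E) (x : E) : set E :=
  [set u | exists a, V (u - a *: x)].

Lemma add_line_id V x : linear_subspace V -> V x -> add_line V x = V.
Proof.
move=> Vsub Vx; apply/seteqP; split=> u.
  by case=> a Vua; rewrite -[u](subrK (a *: x)) addrC; apply: Vsub.2.
by move=> Vu; exists 0; rewrite scale0r subr0.
Qed.

Lemma lin_span_nil : lin_span [::] = [set 0].
Proof.
apply/seteqP; split=> u; first by case=> c ->; rewrite big_ord0.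
by move=> ->; apply: (linear_subspace_lin_span [::]).1.
Qed.

Lemma sum_nth_cons (x : E) s (c : seq K) :
  \sum_(i < size (x :: s)) c`_i *: (x :: s)`_i =
  c`_0 *: x + \sum_(i < size s) (behead c)`_i *: s`_i.
Proof.
by rewrite big_ord_recl; congr (_ + _); apply: eq_bigr => i _; rewrite nth_behead.
Qed.

Lemma lin_span_cons x s : lin_span (x :: s) = add_line (lin_span s) x.
Proof.
apply/seteqP; split=> u.
  case=> c ->; exists c`_0, (behead c).
  by rewrite sum_nth_cons addrAC subrr add0r.
case=> a [c eu]; exists (a :: c).
by rewrite sum_nth_cons /= -eu addrC subrK.
Qed.

Lemma lin_span_sum_ord n (e : 'I_n -> E) :
  exists s, forall c : 'I_n -> K, lin_span s (\sum_(i < n) c i *: e i).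
Proof.
elim: n e => [|n IH] e.
  by exists [::] => c; rewrite big_ord0 lin_span_nil.
have [s Hs] := IH (fun i => e (lift ord0 i)).
exists (e ord0 :: s) => c; rewrite lin_span_cons; exists (c ord0).
by rewrite big_ord_recl addrAC subrr add0r; apply: Hs.
Qed.

Lemma linear_subspace_cap_lin_span V s : linear_subspace V ->
  exists2 f : seq E, (forall k, V f`_k) & V `&` lin_span s `<=` lin_span f.
Proof.
move=> Vsub; elim: s => [|x s [f Vf sVf]].
  by exists [::] => [k|u [_]]; [rewrite nth_nil; apply: Vsub.1 | rewrite lin_span_nil].
have [[v [Vv svx nsv]]|] :=
  pselect (exists v, [/\ V v, lin_span (x :: s) v & ~ lin_span s v]).
  exists (v :: f) => [[|k] //=|u [Vu]].
  rewrite (lin_span_cons x) => -[b sub].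
  move: svx; rewrite lin_span_cons => -[a sva].
  have a0 : a != 0.
    by apply: contra_notN nsv => /eqP a0; rewrite a0 scale0r subr0 in sva.
  rewrite lin_span_cons; exists (b / a); apply: sVf; split.
    by apply: linear_subspaceB => //; apply: linear_subspaceZ.
  have -> : u - b / a *: v = (u - b *: x) - b / a *: (v - a *: x).
    by rewrite scalerBr scalerA divfK // opprB addrA subrK.
  have span_sub := linear_subspace_lin_span s.
  by apply: linear_subspaceB span_sub sub (linear_subspaceZ _ span_sub sva).
move=> noV; exists f => // u [Vu su]; apply: sVf; split => //.
by apply: contrapT => nsu; apply: noV; exists u.
Qed.

End LinearSpan.

Section NormedSpan.
Variables (R : realType) (B : normedModType R).

Lemma closure_cvg_seq (A : set B) z : closure A z ->
  exists2 w : nat -> B, (forall n, A (w n)) & w @ \oo --> z.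
Proof.
move=> Az; have /choice [w Aw] : forall n : nat, exists w, A w /\ ball z n.+1%:R^-1 w.
  by move=> n; apply: Az; apply: nbhsx_ballx; rewrite invr_gt0.
exists w => [n|]; first exact: (Aw n).1.
apply/cvgrPdist_lt => e e0; near=> n.
have := (Aw n).2; rewrite -ball_normE /= => /lt_trans; apply.
by near: n; exact: near_infty_natSinv_lt (PosNum e0).
Unshelve. all: by end_near.
Qed.

Lemma closed_linear_subspace_dist (V : set B) x :
  linear_subspace V -> closed V -> ~ V x ->
  exists2 d, 0 < d & forall a y, V y -> `|a| * d <= `|a *: x + y|.
Proof.
move=> Vsub Vcl nVx.
have /nbhs_ballP [d d0 dV] : nbhs x (~` V).
  by apply: open_nbhs_nbhs; split => //; apply: closed_openC.
exists d => // a y Vy; have [->|a0] := eqVneq a 0; first by rewrite normr0 mul0r.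
have -> : a *: x + y = a *: (x - (- a^-1) *: y).
  by rewrite scaleNr opprK scalerDr scalerA mulfV // scale1r.
rewrite normrZ ler_wpM2l // leNgt; apply/negP => xy.
by apply: (dV (- a^-1 *: y)); [rewrite -ball_normE | apply: linear_subspaceZ].
Qed.

Lemma closed_add_line (V : set B) x :
  linear_subspace V -> closed V -> closed (add_line V x).
Proof.
move=> Vsub Vcl; have [Vx|nVx] := pselect (V x); first by rewrite add_line_id.
move=> z /closure_cvg_seq [w /choice [a Va] wz].
have [d d0 Vd] := closed_linear_subspace_dist Vsub Vcl nVx.
have a_lip m n : `|a m - a n| * d <= `|w m - w n|.
  have := Vd (a m - a n) _ (linear_subspaceB Vsub (Va m) (Va n)).
  by rewrite scalerBl opprB addrACA [a m *: x + _]addrC subrK addKr.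
have /cvg_ex [a0 aa0] : cvg (a @ \oo).
  apply/cauchy_cvgP/cauchy_exP => e e0.
  have ed0 : 0 < e * d / 2 by rewrite divr_gt0 ?mulr_gt0.
  have [N _ wN] := (cvgrPdist_lt _ _).1 wz _ ed0.
  exists (a N), N => // n /= Nn; rewrite -ball_normE /= -(ltr_pM2r d0).
  apply: le_lt_trans (a_lip N n) _; rewrite (splitr (e * d)).
  rewrite (le_lt_trans (ler_distD z _ _)) // distrC.
  by apply: ltrD; apply: wN; rewrite /= ?leqnn.
exists a0; apply: (closed_cvg _ Vcl _ _ (cvgB wz (cvgZ aa0 (cvg_cst x)))).
exact: nearW.
Qed.

Lemma closed_lin_span (s : seq B) : closed (lin_span s).
Proof.
elim: s => [|x s IH].
  rewrite lin_span_nil; apply: accessible_closed_set1.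
  exact/hausdorff_accessible/norm_hausdorff.
by rewrite lin_span_cons; apply: closed_add_line (linear_subspace_lin_span s) IH.
Qed.

Lemma lin_span_coord_bounded (s : seq B) :
  exists2 C, 0 < C & forall u, lin_span s u ->
  exists2 c : seq R, u = \sum_(i < size s) c`_i *: s`_i &
    forall i, `|c`_i| <= C * `|u|.
Proof.
elim: s => [|x s [C C0 IH]].
  exists 1 => // u; rewrite lin_span_nil => ->; exists [::] => [|i].
    by rewrite big_ord0.
  by rewrite nth_nil !normr0 mulr0.
have [sx|nsx] := pselect (lin_span s x).
  exists C => // u.
  rewrite lin_span_cons (add_line_id (linear_subspace_lin_span s) sx).
  move=> /IH [c cu cb].
  exists (0 :: c) => [|[|i] /=]; last exact: cb.
    by rewrite sum_nth_cons /= scale0r add0r.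
  by rewrite normr0 mulr_ge0 // ltW.
have [d d0 Vd] :=
  closed_linear_subspace_dist (linear_subspace_lin_span s) (@closed_lin_span s) nsx.
have x0 : 0 <= `|x| / d by rewrite divr_ge0 // ltW.
have C1 : 0 <= C * (1 + `|x| / d) by rewrite mulr_ge0 ?addr_ge0 // ltW.
exists (d^-1 + C * (1 + `|x| / d)); first by rewrite ltr_pwDl ?invr_gt0.
move=> u; rewrite lin_span_cons => -[a sua]; have [c cv cb] := IH _ sua.
have au : `|a| <= d^-1 * `|u|.
  by rewrite mulrC ler_pdivlMr //; have := Vd a _ sua; rewrite addrC subrK.
have uau : `|u - a *: x| <= (1 + `|x| / d) * `|u|.
  rewrite (le_trans (ler_normB _ _)) // normrZ mulrDl mul1r lerD2l.
  by rewrite -mulrA mulrC ler_wpM2l.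
exists (a :: c) => [|[|i] /=].
- by rewrite sum_nth_cons /= -cv addrC subrK.
- by rewrite (le_trans au) // ler_wpM2r // lerDl.
- rewrite (le_trans (cb i)) // (le_trans (ler_wpM2l (ltW C0) uau)) // mulrA.
  by rewrite ler_wpM2r // lerDr invr_ge0 ltW.
Qed.

End NormedSpan.

Section FiniteDimensionalUniformBoundedness.
Variables (R : realType) (B W : normedModType R) (I : Type) (D : set I).
Variable g : I -> B -> W.
Hypothesis g_linear :
  forall i, D i -> forall a u v, g i (a *: u + v) = a *: g i u + g i v.

Let bounded_orbit u := exists M, forall i, D i -> `|g i u| <= M.

Let g0 i : D i -> g i 0 = 0.
Proof.
by move=> Di; have := g_linear Di (-1) 0 0; rewrite scaleN1r oppr0 addr0 scaleN1r addNr.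
Qed.

Let g_sum i n (c : 'I_n -> R) (e : 'I_n -> B) : D i ->
  g i (\sum_(k < n) c k *: e k) = \sum_(k < n) c k *: g i (e k).
Proof.
move=> Di; have gD : {morph g i : u v / u + v}.
  by move=> u v; rewrite -[u]scale1r g_linear // !scale1r.
rewrite (big_morph (g i) gD (g0 Di)); apply: eq_bigr => k _.
by rewrite -[_ *: e k]addr0 g_linear // g0 // addr0.
Qed.

Lemma linear_subspace_bounded_orbit : linear_subspace bounded_orbit.
Proof.
split; first by exists 0 => i Di; rewrite g0 // normr0.
move=> a u v [Mu Hu] [Mv Hv]; exists (`|a| * Mu + Mv) => i Di.
rewrite g_linear // (le_trans (ler_normD _ _)) // normrZ.
by rewrite lerD ?Hv // ler_wpM2l ?Hu.
Qed.

Theorem findim_uniform_boundedness : finite_dimensional B ->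
  exists L, 0 < L /\
    forall u, bounded_orbit u -> forall i, D i -> `|g i u| <= L * `|u|.
Proof.
case=> n [e spanned_e].
have [s spanned_s] := lin_span_sum_ord e.
have [f f_bounded sf] :=
  linear_subspace_cap_lin_span s linear_subspace_bounded_orbit.
have [C C0 f_coord] := lin_span_coord_bounded f.
have /choice [M fM] : forall k, exists M, forall i, D i -> `|g i f`_k| <= M.
  exact: f_bounded.
exists (C * \sum_(k < size f) `|M k| + 1); split.
  by rewrite ltr_pwDr // mulr_ge0 ?sumr_ge0 // ltW.
move=> u bu i Di.
have su : lin_span s u by have [c ->] := spanned_e u; apply: spanned_s.
have [c uc cb] := f_coord u (sf u (conj bu su)).
rewrite {1}uc g_sum // (le_trans (ler_norm_sum _ _ _)) //.
apply: (@le_trans _ _ (\sum_(k < size f) C * `|u| * `|M k|)).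
  apply: ler_sum => k _; rewrite normrZ ler_pM ?normr_ge0 ?cb //.
  exact: le_trans (fM k i Di) (ler_norm _).
by rewrite -mulr_sumr mulrDl mul1r mulrAC lerDl.
Qed.

End FiniteDimensionalUniformBoundedness.

Theorem mainTheorem9 (R : realType) (S T : set R)
  (Y : pseudoMetricType R) (sigma : R -> Y -> Y)
  (B : completeNormedModType R) (phi : R -> B -> Y -> B) :
  hausdorff_space Y ->
  is_time_set S -> is_time_semigroup S T ->
  dynamical_system S sigma ->
  linear_cocycle T sigma phi ->
  finite_dimensional B ->
  forall y : Y, exists L : R, 0 < L /\
    forall t : R, T t -> 0 <= t ->
    forall u : B, bounded_forward_set T phi y u -> `|phi t u y| <= L * `|u|.
Proof.
(* Only the linearity of phi(t, ., y) and the finite dimension of B matter. *)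
move=> _ _ _ _ [_ [_ [_ phi_linear]]] B_findim y.
have [L [L0 HL]] := findim_uniform_boundedness (D := [set t | T t /\ 0 <= t])
  (g := fun t u => phi t u y) (fun t Dt => phi_linear t y Dt.1) B_findim.
exists L; split => // t Tt t0 u [M HM]; apply: HL; last by split.
by exists M => s [Ts s0]; apply: HM.
Qed.
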